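(* For all integers $s,t\ge 1$ there exists an $H(2^{t+1},\,s2^t,\,2^{t+1}-1,\,2^{t+1}-2)$ design.
   Context: For an integer $q\ge1$, $Q_q=\{0,1,\dots,q-1\}$ and $Q_{q*}=Q_q\cup\{*\}$. The weight of a word $u\in Q_{q*}^n$ is $n$ minus the number of $*$ symbols in $u$. For $u,v\in Q_{q*}^n$ we say $u$ extends $v$ if $u_i=v_i$ for every position $i$ with $v_i\neq *$. For integers $n\ge w\ge t\ge1$, $q\ge1$, an $H(n,q,w,t)$ design is a set $S$ of words of weight $w$ in $Q_{q*}^n$ such that every word of weight $t$ in $Q_{q*}^n$ is extended by exactly one element of $S$. *)

From mathcomp Require Import all_boot.
Set Implicit Arguments. Unset Strict Implicit. Unset Printing Implicit Defensive.

(* A word of length n over Q_{q*} = Q_q ∪ {*}: position i holds [Some a]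
   with a ∈ Q_q = 'I_q, or [None] for the symbol *. *)
Definition word (n q : nat) := {ffun 'I_n -> option 'I_q}.

Definition weight (n q : nat) (u : word n q) : nat :=
  #|[set i : 'I_n | u i != None]|.

Definition extends (n q : nat) (u v : word n q) : bool :=
  [forall i : 'I_n, (v i != None) ==> (u i == v i)].

Definition H_design (n q w t : nat) (S : {set word n q}) : Prop :=
  [/\ [&& t <= w, w <= n, 1 <= t & 1 <= q],
      (forall u, u \in S -> weight u = w) &
      (forall v : word n q, weight v = t ->
         #|[set u in S | extends u v]| = 1)].
Arguments H_design : clear implicits.

From mathcomp Require Import all_boot all_algebra finfield.
Import GRing.Theory.
Set Implicit Arguments. Unset Strict Implicit. Unset Printing Implicit Defensive.

(* Identify the positions with the field F = GF(2^(t+1)) and the alphabet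
   with K x Z_s, where K = {x^2 + x | x in F} is an additive subgroup of
   index 2, and fix c outside K. A block is a word with a single star, at
   position i, whose labels (a_k, g_k) satisfy sum_k (i + k) a_k = c i and
   sum_k g_k = 0. A word with stars at a and b becomes a block with star at a
   by filling b with the unique symbol whose K-part x_ab solves the first
   equation, provided x_ab lies in K. In characteristic 2,
   x_ab + x_ba = c - sum_k a_k, which lies outside K, so exactly one of
   x_ab, x_ba is in K: every such word has exactly one completion. *)

Section StarDesign.
Local Open Scope ring_scope.

Variables (F : fieldType) (n q : nat) (G : zmodType).
Hypothesis F2 : 2%N \in [pchar F].
Variable e : 'I_n -> F.
Hypothesis e_inj : injective e.
Variable K : pred F.
Hypothesis K0 : 0 \in K.
Hypothesis KD : forall a b, a \in K -> b \in K -> a + b \in K.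
Hypothesis KND : forall a b, a \notin K -> b \notin K -> a + b \in K.
Variable c : F.
Hypothesis cNK : c \notin K.
Variables (dec : 'I_q -> F * G) (enc : F -> G -> 'I_q).
Hypothesis dec_memK : forall y, (dec y).1 \in K.
Hypothesis encK : forall a g, a \in K -> dec (enc a g) = (a, g).
Hypothesis decK : forall y, enc (dec y).1 (dec y).2 = y.

Definition labelK (o : option 'I_q) : F := if o is Some y then (dec y).1 else 0.
Definition labelG (o : option 'I_q) : G := if o is Some y then (dec y).2 else 0.

Definition star_only_at (i : 'I_n) (u : word n q) : bool :=
  [forall k, (u k == None) == (k == i)].

Definition block_at (i : 'I_n) (u : word n q) : bool :=
  [&& star_only_at i u,
      \sum_k (e i + e k) * labelK (u k) == c * e i
    & \sum_k labelG (u k) == 0].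

Definition design : {set word n q} := [set u | [exists i, block_at i u]].

Lemma design_weight u : u \in design -> weight u = (n - 1)%N.
Proof.
rewrite inE => /existsP[i /and3P[/forallP ui _ _]].
rewrite /weight; have -> : [set k | u k != None] = [set~ i].
  by apply/setP => k; rewrite !inE (eqP (ui k)).
by rewrite cardsC1 card_ord subn1.
Qed.

Lemma block_at_star i u : block_at i u -> u i = None.
Proof. by case/and3P=> /forallP/(_ i); rewrite eqxx => /eqP/eqP. Qed.

Definition fill (v : word n q) (b : 'I_n) (y : 'I_q) : word n q :=
  [ffun k => if k == b then Some y else v k].

Lemma sum_fill (V : nmodType) (f : 'I_n -> option 'I_q -> V) (v : word n q) b y :
  v b = None -> f b None = 0 ->
  \sum_k f k (fill v b y k) = f b (Some y) + \sum_k f k (v k).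
Proof.
move=> vb fb0; rewrite (bigD1 b) //= [in RHS](bigD1 b) //= ffunE eqxx vb fb0.
rewrite add0r; congr (_ + _); apply: eq_bigr => k /negbTE kb.
by rewrite ffunE kb.
Qed.

Lemma sum_labelK_memK (v : word n q) : \sum_k labelK (v k) \in K.
Proof. by apply: (big_ind (fun x => x \in K)) => // k _; case: (v k). Qed.

Lemma memK_xor x y : x + y \notin K -> (x \in K) = (y \notin K).
Proof.
move=> xyNK; case xK: (x \in K); case yK: (y \in K) => //=; case/negP: xyNK.
  exact: KD.
by apply: KND; rewrite ?xK ?yK.
Qed.

Lemma e_add_neq0 a b : a != b -> e a + e b != 0.
Proof. by move=> ab; rewrite -GRing.subr_pchar2 // subr_eq0 (inj_eq e_inj). Qed.

Definition fill_label (v : word n q) (i j : 'I_n) : F :=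
  (c * e i - \sum_k (e i + e k) * labelK (v k)) / (e i + e j).

Definition labelG_sum (v : word n q) : G := \sum_k labelG (v k).

Lemma fill_label_sum (v : word n q) a b : a != b ->
  fill_label v a b + fill_label v b a = c - \sum_k labelK (v k).
Proof.
move=> ab; have eab := e_add_neq0 ab.
apply: (mulIf eab); rewrite /fill_label [e b + e a]addrC mulrDl !divfK //.
rewrite mulrBl addrACA -opprD -big_split /= -mulrDr; congr (_ - _).
rewrite mulr_suml; apply: eq_bigr => k _; rewrite -mulrDl mulrC; congr (_ * _).
by rewrite addrACA addrr_pchar2 // addr0.
Qed.

Lemma fill_label_memK (v : word n q) a b : a != b ->
  (fill_label v a b \in K) = (fill_label v b a \notin K).
Proof.
move=> ab; apply: memK_xor; rewrite fill_label_sum //.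
apply: contra cNK => h; have := KD h (sum_labelK_memK v); by rewrite subrK.
Qed.

Section TwoStars.

Variables (v : word n q) (a b : 'I_n).
Hypothesis ab : a != b.
Hypothesis v_stars : forall k, (v k == None) = (k == a) || (k == b).

Let va : v a = None. Proof. by apply/eqP; rewrite v_stars eqxx. Qed.
Let vb : v b = None. Proof. by apply/eqP; rewrite v_stars eqxx orbT. Qed.

Lemma fill_block y :
  block_at a (fill v b y) =
  ((dec y).1 == fill_label v a b) && ((dec y).2 == - labelG_sum v).
Proof.
have eab := e_add_neq0 ab.
rewrite /block_at; have -> : star_only_at a (fill v b y).
  apply/forallP => k; rewrite ffunE; case: (eqVneq k b) => [->|kb].
    by rewrite [b == a]eq_sym (negbTE ab).
  by rewrite v_stars (negbTE kb) orbF.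
rewrite (sum_fill (f := fun k o => (e a + e k) * labelK o)) ?mulr0 //.
rewrite (sum_fill (f := fun=> labelG)) //= -addr_eq0 addrC.
congr (_ && _); rewrite addrC eq_sym -subr_eq eq_sym [_ * (dec y).1]mulrC.
rewrite /fill_label; apply/eqP/eqP => [<-|->]; [by rewrite mulfK | by rewrite divfK].
Qed.

Lemma extends_fill y : extends (fill v b y) v.
Proof.
apply/forallP => k; apply/implyP; rewrite ffunE.
by case: (eqVneq k b) => [->|_]; rewrite ?vb.
Qed.

Lemma extension_is_fill u : block_at a u -> extends u v ->
  exists y, u = fill v b y.
Proof.
move=> ua /forallP uv; have /and3P[/forallP u_star _ _] := ua.
have := u_star b; rewrite [b == a]eq_sym (negbTE ab).
case ub: (u b) => [y|] // _; exists y.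
apply/ffunP => k; rewrite ffunE; case: (eqVneq k b) => [->//|kb].
case: (eqVneq k a) => [->|ka]; first by rewrite va (block_at_star ua).
have vk : v k != None by rewrite v_stars (negbTE ka) (negbTE kb).
by have /implyP/(_ vk)/eqP := uv k.
Qed.

End TwoStars.

Lemma weight_two_stars (v : word n q) : (2 <= n)%N -> weight v = (n - 2)%N ->
  exists a b, a != b /\ forall k, (v k == None) = (k == a) || (k == b).
Proof.
move=> n2 wv; have : #|[set k | v k == None]| == 2%N.
  have := cardsC [set k | v k == None]; rewrite card_ord.
  have -> : ~: [set k | v k == None] = [set k | v k != None].
    by apply/setP => k; rewrite !inE.
  by rewrite -/(weight v) wv => h; rewrite -(eqn_add2r (n - 2)) h subnKC.
case/cards2P => a [b [ab stars]]; exists a, b; split => // k.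
by move/setP: stars => /(_ k); rewrite !inE.
Qed.

Lemma design_extension_unique (v : word n q) :
  (2 <= n)%N -> weight v = (n - 2)%N -> #|[set u in design | extends u v]| = 1%N.
Proof.
move=> n2 wv; have [i [j [ij stars]]] := weight_two_stars n2 wv.
wlog xK : i j ij stars / fill_label v i j \in K.
  move=> gen; case: (boolP (fill_label v i j \in K)); first exact: gen.
  rewrite fill_label_memK // negbK; apply: gen; first by rewrite eq_sym.
  by move=> k; rewrite orbC.
have ji : j != i by rewrite eq_sym.
have stars' k : (v k == None) = (k == j) || (k == i) by rewrite orbC.
apply/eqP/cards1P; exists (fill v j (enc (fill_label v i j) (- labelG_sum v))).
apply/setP => u; rewrite !inE; apply/andP/eqP => [[/existsP[a ua] uv]|->].
  have : (a == i) || (a == j).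
    rewrite -stars; apply: contraT => va.
    by have /implyP/(_ va) := forallP uv a; rewrite (block_at_star ua) eq_sym (negbTE va).
  case/orP=> /eqP ?; subst a.
  - have [y uy] := extension_is_fill ij stars ua uv.
    move: ua; rewrite uy fill_block // => /andP[/eqP dy1 /eqP dy2].
    by rewrite -(decK y) dy1 dy2.
  - have [y uy] := extension_is_fill ji stars' ua uv.
    move: ua; rewrite uy fill_block // => /andP[/eqP dy1 _].
    by move: xK; rewrite fill_label_memK // -dy1 dec_memK.
split; last exact: extends_fill.
by apply/existsP; exists i; rewrite fill_block // encK // !eqxx.
Qed.

End StarDesign.

Section ArtinSchreier.
Local Open Scope ring_scope.

Variable F : finFieldType.
Hypothesis F2 : 2%N \in [pchar F].

Definition artin_schreier (x : F) : F := x ^+ 2 + x.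
Definition AS_image : {set F} := artin_schreier @: [set: F].

Lemma artin_schreierD x y :
  artin_schreier (x + y) = artin_schreier x + artin_schreier y.
Proof.
rewrite /artin_schreier sqrrD -mulr_natr (GRing.pcharf0 F2) mulr0 addr0.
by rewrite addrACA.
Qed.

Lemma artin_schreier_eq x y :
  (artin_schreier y == artin_schreier x) = (y == x) || (y == x + 1).
Proof.
rewrite -subr_eq0 GRing.subr_pchar2 // -artin_schreierD -GRing.subr_pchar2 //.
rewrite /artin_schreier expr2 -{3}[y - x]mulr1 -mulrDr mulf_eq0 subr_eq0.
by rewrite addr_eq0 (oppr_pchar2 F2 1) subr_eq addrC.
Qed.

Lemma AS_image0 : 0 \in AS_image.
Proof. by apply/imsetP; exists 0; rewrite // /artin_schreier expr2 mulr0 addr0. Qed.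

Lemma AS_imageD a b : a \in AS_image -> b \in AS_image -> a + b \in AS_image.
Proof.
case/imsetP=> x _ -> /imsetP[y _ ->]; apply/imsetP.
by exists (x + y); rewrite ?artin_schreierD.
Qed.

Lemma card_AS_image : #|F| = (2 * #|AS_image|)%N.
Proof.
rewrite -cardsT -sum1_card (partition_big_imset artin_schreier) /= -/AS_image.
rewrite mulnC -sum_nat_const; apply: eq_bigr => _ /imsetP[x _ ->].
rewrite (eq_bigl (mem [set x; x + 1])) => [|y]; last by rewrite !inE artin_schreier_eq.
by rewrite sum1_card cards2 eq_sym -subr_eq0 addrC addKr oner_eq0.
Qed.

Lemma card_AS_imageC : #|~: AS_image| = #|AS_image|.
Proof.
apply/eqP; rewrite -(eqn_add2l #|AS_image|) cardsC card_AS_image.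
by rewrite mul2n addnn.
Qed.

(* Translation by a non-member maps AS_image into, hence onto, its complement. *)
Lemma AS_imageND a b : a \notin AS_image -> b \notin AS_image -> a + b \in AS_image.
Proof.
move=> aNK bNK.
have sub : (+%R^~ a) @: AS_image \subset ~: AS_image.
  apply/subsetP => _ /imsetP[k kK ->]; rewrite inE; apply: contra aNK => h.
  by have := AS_imageD h kK; rewrite addrAC addrr_pchar2 // add0r.
have onto : (+%R^~ a) @: AS_image = ~: AS_image.
  by apply/eqP; rewrite eqEcard sub card_imset ?card_AS_imageC //=; apply: addIr.
have : b \in ~: AS_image by rewrite inE.
rewrite -onto => /imsetP[k kK ->].
by rewrite addrC -addrA addrr_pchar2 // addr0.
Qed.

Lemma AS_image_proper : exists c, c \notin AS_image.
Proof.
have /set0Pn[c] : ~: AS_image != set0.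
  by rewrite -card_gt0 card_AS_imageC card_gt0; apply/set0Pn; exists 0; exact: AS_image0.
by rewrite inE; exists c.
Qed.

End ArtinSchreier.

Lemma alphabet_coding (T G : finType) (K : {set T}) (x0 : T) (q : nat) :
  x0 \in K -> #|K| * #|G| = q ->
  exists (dec : 'I_q -> T * G) (enc : T -> G -> 'I_q),
    [/\ forall y, (dec y).1 \in K,
        forall a g, a \in K -> dec (enc a g) = (a, g)
      & forall y, enc (dec y).1 (dec y).2 = y].
Proof.
move=> x0K cardq.
have card_sym : #|{: {x | x \in K} * G}| = q.
  by rewrite card_prod card_sig -cardq; congr (_ * _); apply: eq_card.
pose dec (y : 'I_q) := let p := enum_val (cast_ord (esym card_sym) y) in (val p.1, p.2).
pose enc (a : T) (g : G) := cast_ord card_sym (enum_rank (insubd (exist _ x0 x0K) a, g)).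
exists dec, enc; split.
- by move=> y; rewrite /dec; case: (enum_val _) => [[a aK] g].
- by move=> a g aK; rewrite /dec /enc cast_ordK enum_rankK /= insubdK.
- move=> y; rewrite /dec /enc /= valKd.
  by rewrite -surjective_pairing enum_valK cast_ordKV.
Qed.

Unset Implicit Arguments.

Theorem corollary2 (s t : nat) (hs : 1 <= s) (ht : 1 <= t) :
  exists S : {set word (2 ^ t.+1) (s * 2 ^ t)},
    H_design (2 ^ t.+1) (s * 2 ^ t) (2 ^ t.+1 - 1) (2 ^ t.+1 - 2) S.
Proof.
have [F F2 cardF] := @pPrimePowerField 2 t.+1 isT (ltn0Sn t).
case: s hs => [//|s] _.
have card_sym : #|AS_image F| * #|'I_s.+1| = s.+1 * 2 ^ t.
  rewrite card_ord mulnC; congr (_ * _); apply/eqP.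
  by rewrite -(eqn_pmul2l (isT : 0 < 2)) -card_AS_image // cardF expnS.
have [dec [enc [dec_memK encK decK]]] := alphabet_coding (AS_image0 F) card_sym.
pose e (k : 'I_(2 ^ t.+1)) : F := enum_val (cast_ord (esym cardF) k).
have e_inj : injective e by move=> x y /enum_val_inj /cast_ord_inj.
have [c cNK] := AS_image_proper F2.
have N4 : 4 <= 2 ^ t.+1 by rewrite (@leq_exp2l 2 2).
exists (design e c dec); split.
- by apply/and4P; rewrite leq_sub2l // leq_subr subn_gt0 (leq_trans _ N4) //
    muln_gt0 expn_gt0.
- exact: design_weight.
- move=> v; apply: (design_extension_unique F2 e_inj (AS_image0 F) (AS_imageD F2)
    (AS_imageND F2) cNK dec_memK encK decK).
  exact: leq_trans _ N4.
Qed.
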